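(* Let $a,b,x$ be non-commuting indeterminates and let $D\in\mathbb{Z}\langle\langle a,b,x\rangle\rangle$ be the unique series satisfying $$D=1+(x-ab+aDb)\,D$$ (equivalently, $D$ is the sum of all Dyck words in $a,b$ in which every occurrence of the factor $ab$ is replaced by $x$). Define $U\in\mathbb{Z}\langle\langle a,b,x\rangle\rangle$ by $(1-aDb)^{-1}=1+aUb$. Then $$U=(1+aUb)\big(1+(x-ab+ba)U\big),$$ and this equation determines $U$ uniquely.
   Context: $\mathbb{Z}\langle\langle a,b,x\rangle\rangle$ is the ring of formal power series in non-commuting variables $a,b,x$ with integer coefficients. A Dyck word is a word in $a,b$ with equally many $a$'s and $b$'s such that every prefix has at least as many $a$'s as $b$'s (equivalently, a lattice path with steps $a=(1,1)$, $b=(1,-1)$ from the origin back to the $x$-axis never going below it); the empty word is included. *)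

(* Formal power series in non-commuting variables a, b, x
   with integer coefficients: functions from words to int. *)
From mathcomp Require Import all_boot all_order all_algebra.
Set Implicit Arguments. Unset Strict Implicit. Unset Printing Implicit Defensive.
Import GRing.Theory.
Local Open Scope ring_scope.

Inductive letter := La | Lb | Lx.

Definition letter_eqb (l m : letter) : bool :=
  match l, m with
  | La, La | Lb, Lb | Lx, Lx => true
  | _, _ => false
  end.

Definition series := seq letter -> int.

Definition sone : series := fun w => if w is [::] then 1 else 0.
Definition slet (c : letter) : series :=
  fun w => if w is [:: l] then (if letter_eqb l c then 1 else 0) else 0.
Definition sa : series := slet La.
Definition sb : series := slet Lb.
Definition sx : series := slet Lx.

Definition sadd (f g : series) : series := fun w => f w + g w.
Definition sopp (f : series) : series := fun w => - f w.
Definition ssub (f g : series) : series := sadd f (sopp g).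
Definition smul (f g : series) : series :=
  fun w => \sum_(i < (size w).+1) f (take i w) * g (drop i w).

From HB Require Import structures.
From mathcomp Require Import all_boot all_order all_algebra.
From mathcomp Require Import boolp zify.
Set Implicit Arguments. Unset Strict Implicit. Unset Printing Implicit Defensive.
Import GRing.Theory.
Local Open Scope ring_scope.

(* Multiplying by a
   series without constant term raises the agreement level by one, so every
   map that does so ("contractive") has at most one fixed point.  Two
   consequences: 1 - q is left and right regular when q(1) = 0, so a one-sided
   inverse of 1 - q is two-sided; and the equation
   V = (1 + aVb)(1 + zV), with z = x - ab + ba, has at most one solution.
   For existence, write P = x - ab + aDb, so (1 - P) D = 1, hence D (1 - P) = 1.
   From (1 + aUb)(1 - aDb) = 1 we get aUb = a(D + UbaD)b, and cancelling the
   outer letters U = (1 + Uba) D.  Thus U (1 - P - ba) = 1, so U is the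
   two-sided inverse of 1 - Q with Q = ba + P, i.e. U = 1 + QU.  Since
   z = Q - aDb, this gives (1 + aUb)(1 + zU) = (1 + aUb)(1 - aDb) U = U. *)

Lemma smul_nil (f g : series) : smul f g [::] = f [::] * g [::].
Proof. by rewrite /smul big_ord1. Qed.

Lemma smul_cons (f g : series) c w :
  smul f g (c :: w) = f [::] * g (c :: w) + smul (fun u => f (c :: u)) g w.
Proof. by rewrite /smul big_ord_recl. Qed.

Lemma smulDl : left_distributive smul sadd.
Proof.
move=> f g h; apply: funext => w; rewrite /smul /sadd -big_split.
by apply: eq_bigr => i _; rewrite mulrDl.
Qed.

Lemma smulDr : right_distributive smul sadd.
Proof.
move=> f g h; apply: funext => w; rewrite /smul /sadd -big_split.
by apply: eq_bigr => i _; rewrite mulrDr.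
Qed.

Section RingLaws.

(* Scalar multiples, needed to state the recursion behind associativity. *)
Let sscale (k : int) (f : series) : series := fun w => k * f w.

Let smulZl k (f h : series) : smul (sscale k f) h = sscale k (smul f h).
Proof.
apply: funext => w; rewrite /smul /sscale mulr_sumr.
by apply: eq_bigr => i _; rewrite mulrA.
Qed.

Lemma smulA : associative smul.
Proof.
move=> f g h; apply: funext => w; elim: w f g h => [|c w IH] f g h.
  by rewrite !smul_nil mulrA.
rewrite !smul_cons smul_nil.
have -> : (fun u => smul f g (c :: u)) =
          sadd (sscale (f [::]) (fun u => g (c :: u))) (smul (fun u => f (c :: u)) g).
  by apply: funext => u; rewrite smul_cons.
by rewrite smulDl smulZl /sadd /sscale IH mulrDr !addrA mulrA.
Qed.

End RingLaws.

Lemma smul1l : left_id sone smul.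
Proof.
move=> f; apply: funext => -[|c w]; first by rewrite smul_nil mul1r.
by rewrite smul_cons mul1r /smul big1 ?addr0 // => i _; rewrite mul0r.
Qed.

Lemma smul1r : right_id sone smul.
Proof.
move=> f; apply: funext => w; elim: w f => [|c w IH] f; first by rewrite smul_nil mulr1.
by rewrite smul_cons IH mulr0 add0r.
Qed.

Lemma saddA : associative sadd.
Proof. by move=> f g h; apply: funext => w; rewrite /sadd addrA. Qed.
Lemma saddC : commutative sadd.
Proof. by move=> f g; apply: funext => w; rewrite /sadd addrC. Qed.
Lemma sadd0 : left_id (fun _ => 0 : int) sadd.
Proof. by move=> f; apply: funext => w; rewrite /sadd add0r. Qed.
Lemma saddN : left_inverse (fun _ => 0 : int) sopp sadd.
Proof. by move=> f; apply: funext => w; rewrite /sadd /sopp addNr. Qed.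

HB.instance Definition _ := gen_eqMixin series.
HB.instance Definition _ := gen_choiceMixin series.
HB.instance Definition _ := GRing.isPzRing.Build series saddA saddC sadd0 saddN
  smulA smul1l smul1r smulDl smulDr.

Lemma saddE (f g : series) : sadd f g = f + g. Proof. by []. Qed.
Lemma smulE (f g : series) : smul f g = f * g. Proof. by []. Qed.

Definition const (f : series) : int := f [::].

Lemma constD (f g : series) : const (f + g) = const f + const g. Proof. by []. Qed.
Lemma constN (f : series) : const (- f) = - const f. Proof. by []. Qed.
Lemma constM (f g : series) : const (f * g) = const f * const g.
Proof. exact: smul_nil. Qed.
Lemma const_letter c : const (slet c) = 0. Proof. by []. Qed.

(* The outer letters a _ b can be cancelled: coefficient of a w b in a F b is F w. *)
Lemma mul_letter_r (f : series) c w d :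
  (f * slet c) (rcons w d) = f w * (if letter_eqb d c then 1 else 0).
Proof.
elim: w f => [|e w IH] f; first by rewrite /= -smulE smul_cons smul_nil mulr0 addr0.
rewrite rcons_cons -smulE smul_cons smulE IH.
have -> : slet c (e :: rcons w d) = 0 by case: w {IH}.
by rewrite mulr0 add0r.
Qed.

Lemma mul_letter_l (f : series) c d w :
  (slet c * f) (d :: w) = (if letter_eqb d c then 1 else 0) * f w.
Proof.
rewrite -smulE smul_cons mul0r add0r; case: w => [|e w].
  by rewrite smul_nil.
by rewrite smul_cons /smul big1 ?addr0 // => i _; rewrite mul0r.
Qed.

Lemma cancel_ab : injective (fun F : series => sa * F * sb).
Proof.
move=> F G h; apply: funext => w.
have /= := congr1 (fun s : series => s (La :: rcons w Lb)) h.
by rewrite -rcons_cons !mul_letter_r !mul_letter_l /= !mul1r !mulr1.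
Qed.

Definition agree n (f g : series) := forall w, (size w < n)%N -> f w = g w.

Lemma agree_add n (f f' g g' : series) :
  agree n f f' -> agree n g g' -> agree n (f + g) (f' + g').
Proof. by move=> hf hg w hw; rewrite -!saddE /sadd hf // hg. Qed.

Lemma agree_mul n (f f' g g' : series) :
  agree n f f' -> agree n g g' -> agree n (f * g) (f' * g').
Proof.
move=> hf hg w hw; rewrite -!smulE /smul; apply: eq_bigr => i _.
rewrite hf ?hg //; first by rewrite size_drop; lia.
by rewrite size_take; case: ifP => // ?; lia.
Qed.

Lemma agree_mull n (q f g : series) :
  const q = 0 -> agree n f g -> agree n.+1 (q * f) (q * g).
Proof.
rewrite /const => hq h w hw; rewrite -!smulE /smul !big_ord_recl /= take0 hq !mul0r !add0r.
by apply: eq_bigr => i _; rewrite h // size_drop /bump /=; have := ltn_ord i; lia.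
Qed.

Lemma agree_mulr n (q f g : series) :
  const q = 0 -> agree n f g -> agree n.+1 (f * q) (g * q).
Proof.
rewrite /const => hq h w hw; rewrite -!smulE /smul !big_ord_recr /= drop_size hq !mulr0 !addr0.
by apply: eq_bigr => i _; rewrite h // size_take /=; have := ltn_ord i; case: ifP; lia.
Qed.

Definition contractive (F : series -> series) :=
  forall n f g, agree n f g -> agree n.+1 (F f) (F g).

(* A contractive map has at most one fixed point: two fixed points agree up
   to every length. *)
Lemma contractive_fixpoint_unique F f g :
  contractive F -> F f = f -> F g = g -> f = g.
Proof.
move=> hF hf hg; suff H : forall n, agree n f g.
  by apply: funext => w; apply: (H (size w).+1).
by elim=> [|n IH] //; rewrite -hf -hg; apply: hF.
Qed.

Lemma one_sub_lreg (q : series) : const q = 0 -> GRing.lreg (1 - q).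
Proof.
move=> hq E E' /eqP; rewrite -subr_eq0 -mulrBr => /eqP h.
apply/eqP; rewrite -subr_eq0; apply/eqP.
apply: (contractive_fixpoint_unique (F := fun X => q * X)) (mulr0 q).
  by move=> n f g; apply: agree_mull.
by apply/esym/eqP; rewrite /= -subr_eq0 -{1}[E - E']mul1r -mulrBl h.
Qed.

Lemma one_sub_rreg (q : series) : const q = 0 -> GRing.rreg (1 - q).
Proof.
move=> hq E E' /eqP; rewrite -subr_eq0 -mulrBl => /eqP h.
apply/eqP; rewrite -subr_eq0; apply/eqP.
apply: (contractive_fixpoint_unique (F := fun X => X * q)) (mul0r q).
  by move=> n f g; apply: agree_mulr.
by apply/esym/eqP; rewrite /= -subr_eq0 -{1}[E - E']mulr1 -mulrBr h.
Qed.

Lemma one_sub_inv_lr (q u : series) : const q = 0 -> (1 - q) * u = 1 -> u * (1 - q) = 1.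
Proof. by move=> hq h; apply: (one_sub_lreg hq); rewrite mulrA h mul1r mulr1. Qed.

Lemma one_sub_inv_rl (q u : series) : const q = 0 -> u * (1 - q) = 1 -> (1 - q) * u = 1.
Proof. by move=> hq h; apply: (one_sub_rreg hq); rewrite -mulrA h mul1r mulr1. Qed.

Lemma equation_contractive (a b z : series) :
  const a = 0 -> const z = 0 -> contractive (fun V => (1 + a * V * b) * (1 + z * V)).
Proof.
move=> ha hz n f g h; apply: agree_mul; apply: agree_add => //.
  by apply: agree_mul => //; apply: agree_mull.
by apply: agree_mull.
Qed.

Section Existence.

Variables D U : series.

(* D solves D = 1 + P D; Q = ba + P is the series that U inverts. *)
Let P := sx - sa * sb + sa * D * sb.
Let Q := sb * sa + P.

Hypothesis hD : D = 1 + P * D.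
Hypothesis hU : (1 + sa * U * sb) * (1 - sa * D * sb) = 1.

Let constP : const P = 0.
Proof. by rewrite !(constD, constN, constM) !const_letter !(mul0r, mulr0, subrr, addr0). Qed.

Lemma D_right_inverse : D * (1 - P) = 1.
Proof. by apply: one_sub_inv_lr constP _; rewrite mulrBl mul1r {1}hD addrK. Qed.

Lemma U_factor : U = (1 + U * sb * sa) * D.
Proof.
apply: cancel_ab => /=.
have haUb : sa * U * sb = (1 + sa * U * sb) * (sa * D * sb).
  by apply: (addrI 1); rewrite -[X in _ = X + _]hU mulrBr mulr1 subrK.
by rewrite haUb !(mulrDl, mulrDr, mul1r) !mulrA.
Qed.

Lemma U_inverse : U = 1 + Q * U.
Proof.
have hUQ : U * (1 - Q) = 1.
  have -> : 1 - Q = (1 - P) - sb * sa by rewrite /Q opprD addrCA addrC.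
  have hUP : U * (1 - P) = 1 + U * sb * sa.
    by rewrite {1}U_factor -mulrA D_right_inverse mulr1.
  by rewrite mulrBr hUP mulrA addrK.
have constQ : const Q = 0 by rewrite constD constP constM const_letter mul0r addr0.
move: (one_sub_inv_rl constQ hUQ); rewrite mulrBl mul1r => hQU.
by rewrite -hQU subrK.
Qed.

Lemma U_equation : U = (1 + sa * U * sb) * (1 + (sx - sa * sb + sb * sa) * U).
Proof.
have -> : sx - sa * sb + sb * sa = Q - sa * D * sb by rewrite /Q /P addrA addrK addrC.
rewrite mulrBl addrA -U_inverse.
have -> : U - sa * D * sb * U = (1 - sa * D * sb) * U by rewrite mulrBl mul1r.
by rewrite mulrA hU mul1r.
Qed.

End Existence.

Theorem theorem4 (D U : series)
  (hD : D = sadd sone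
              (smul (sadd (ssub sx (smul sa sb)) (smul (smul sa D) sb)) D))
  (hU : smul (ssub sone (smul (smul sa D) sb)) (sadd sone (smul (smul sa U) sb)) = sone
        /\ smul (sadd sone (smul (smul sa U) sb)) (ssub sone (smul (smul sa D) sb)) = sone) :
  U = smul (sadd sone (smul (smul sa U) sb))
           (sadd sone (smul (sadd (ssub sx (smul sa sb)) (smul sb sa)) U))
  /\ (forall V : series,
        V = smul (sadd sone (smul (smul sa V) sb))
                 (sadd sone (smul (sadd (ssub sx (smul sa sb)) (smul sb sa)) V))
        -> V = U).
Proof.
have hU_eq : U = (1 + sa * U * sb) * (1 + (sx - sa * sb + sb * sa) * U).
  exact: U_equation hD hU.2.
split=> // V hV.
have const_z : const (sx - sa * sb + sb * sa) = 0.
  by rewrite !(constD, constN, constM) !const_letter !(mul0r, subrr, addr0).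
apply: (contractive_fixpoint_unique (@equation_contractive sa sb _ (const_letter La) const_z)).
- exact: esym hV.
- exact: esym hU_eq.
Qed.
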